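(* Let $M$ be a proper metric space and $\mathcal{X},\mathcal{Z},\mathcal{W}$ big families in $M$ with $\mathcal{X}\Cap\mathcal{W}\subseteq\mathcal{X}\Cap\mathcal{Z}$. Then the map $HX_n(\mathcal{X},\mathcal{X}\Cap\mathcal{Z})\to HX_n(\mathcal{X}\Cup\mathcal{W},(\mathcal{X}\Cap\mathcal{Z})\Cup\mathcal{W})$ induced by the inclusion $CX_\bullet(\mathcal{X})\subseteq CX_\bullet(\mathcal{X}\Cup\mathcal{W})$ is an isomorphism for every $n$.
   Context: A big family is a collection of subsets of $M$ closed under subsets, finite unions and $R$-thickenings ($Y_R=\{x:d(x,Y)\le R\}$). $\mathcal{X}\Cap\mathcal{Y}=\{X\cap Y\}$, $\mathcal{X}\Cup\mathcal{Y}=\{X\cup Y\}$ elementwise. With $M^{n+1}$ carrying the max metric and $\Delta_R$ the $R$-thickening of the multi-diagonal, a coarse $n$-chain is a complex-valued locally finite regular Borel measure on $M^{n+1}$ supported in some $\Delta_R$; it is supported on $Y$ if it vanishes outside $Y^{n+1}$, and $CX_n(\mathcal{Y})$ consists of coarse chains supported on some member of $\mathcal{Y}$. Differential $\partial\mu=\sum_{i}(-1)^i(\pi_i)_*\mu$, $\pi_i$ omitting coordinate $i$. $HX_n(\mathcal{X},\mathcal{X}\Cap\mathcal{Y})$ is the homology of $CX_\bullet(\mathcal{X})/CX_\bullet(\mathcal{X}\Cap\mathcal{Y})$. *)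

From mathcomp Require Import all_boot all_order all_algebra.
From mathcomp Require Import all_classical all_reals all_analysis.
From mathcomp Require Import complex.
Import GRing.Theory Num.Theory numFieldNormedType.Exports.
Local Open Scope ring_scope.
Local Open Scope classical_set_scope.

Section Metric.
Context {R : realType} {X : Type} (d : X -> X -> R).

Definition is_metric : Prop :=
  [/\ (forall x y, 0 <= d x y), (forall x y, d x y = 0 <-> x = y),
      (forall x y, d x y = d y x) & (forall x y z, d x z <= d x y + d y z)].

Definition dopen (U : set X) : Prop :=
  forall x, U x -> exists2 e : R, 0 < e & [set y | d x y < e] `<=` U.

Definition dclosed (K : set X) : Prop := dopen (~` K).

Definition dbounded (A : set X) : Prop :=
  exists r : R, forall x y, A x -> A y -> d x y <= r.

Definition dcompact (K : set X) : Prop :=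
  forall (I : Type) (U : I -> set X), (forall i, dopen (U i)) ->
    K `<=` \bigcup_(i in [set: I]) U i ->
    exists F : set I, finite_set F /\ K `<=` \bigcup_(i in F) U i.

Definition proper_metric : Prop :=
  forall K, dclosed K -> dbounded K -> dcompact K.

Definition dborel (A : set X) : Prop := <<s dopen >> A.

Definition bborel (A : set X) : Prop := dborel A /\ dbounded A.

(* R-thickening  Y_r = {x : d(x,Y) <= r}  (d(x,Y) = inf_{y in Y} d(x,y)) *)
Definition thick (r : R) (Y : set X) : set X :=
  [set x | forall e : R, 0 < e -> exists2 y, Y y & d x y < r + e].

End Metric.

(** A measure [mu : set X -> R[i]] is only meaningful on bounded Borel sets
   (where a locally finite measure takes finite values); its values on other
   sets are irrelevant junk. *)
Section Measures.
Context {R : realType} {X : Type} (D : X -> X -> R).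

Definition cabs (z : R[i]) : R := Num.sqrt (complex.Re z ^+ 2 + complex.Im z ^+ 2).

Definition csigma_additive (mu : set X -> R[i]) : Prop :=
  forall F : nat -> set X, (forall k, dborel D (F k)) -> trivIset setT F ->
    dbounded D (\bigcup_k F k) ->
    (\sum_(k < N) complex.Re (mu (F k)) @[N --> \oo] --> complex.Re (mu (\bigcup_k F k))) /\
    (\sum_(k < N) complex.Im (mu (F k)) @[N --> \oo] --> complex.Im (mu (\bigcup_k F k))).

Definition var_le (mu : set X -> R[i]) (S : set X) (eps : R) : Prop :=
  forall F : nat -> set X, (forall k, dborel D (F k) /\ F k `<=` S) ->
    trivIset setT F -> forall N, \sum_(k < N) cabs (mu (F k)) <= eps.

Definition cregular (mu : set X -> R[i]) : Prop :=
  forall A, bborel D A -> forall eps : R, 0 < eps ->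
    exists (K : set X) (U : set X),
      [/\ dcompact D K, dopen D U, dbounded D U, K `<=` A /\ A `<=` U &
           var_le mu (U `\` K) eps].

Definition lf_reg_borel_cmeasure (mu : set X -> R[i]) : Prop :=
  csigma_additive mu /\ cregular mu.

Definition vanishes_on (mu : set X -> R[i]) (S : set X) : Prop :=
  forall A, bborel D A -> A `<=` S -> mu A = 0.

(* c is the (well-defined) value of mu on the possibly unbounded set S,
   when mu is concentrated on a bounded Borel part A of S *)
Definition ext_val (mu : set X -> R[i]) (S : set X) (c : R[i]) : Prop :=
  exists A, [/\ bborel D A, A `<=` S, vanishes_on mu (S `\` A) & mu A = c].

Definition extv (mu : set X -> R[i]) (S : set X) : R[i] :=
  xget 0 [set c | ext_val mu S c].

End Measures.

Section Coarse.
Context {R : realType} {M : Type} (d : M -> M -> R).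

Definition dmax (n : nat) (x y : 'I_n.+1 -> M) : R :=
  \big[Num.max/0]_(i < n.+1) d (x i) (y i).

Definition multidiag (n : nat) : set ('I_n.+1 -> M) :=
  [set x | exists m : M, forall i, x i = m].

Definition Delta (n : nat) (r : R) : set ('I_n.+1 -> M) :=
  thick (dmax n) r (multidiag n).

Definition cpow (Y : set M) (n : nat) : set ('I_n.+1 -> M) :=
  [set x | forall i, Y (x i)].

Definition coarse_chain (n : nat) (mu : set ('I_n.+1 -> M) -> R[i]) : Prop :=
  lf_reg_borel_cmeasure (dmax n) mu /\
  exists r : R, vanishes_on (dmax n) mu (~` Delta n r).

Definition supported_on (n : nat) (Y : set M) (mu : set ('I_n.+1 -> M) -> R[i]) :=
  vanishes_on (dmax n) mu (~` cpow Y n).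

Definition CX (n : nat) (F : set (set M)) (mu : set ('I_n.+1 -> M) -> R[i]) :=
  coarse_chain n mu /\ exists2 Y, F Y & supported_on n Y mu.

Definition face (n : nat) (i : 'I_n.+2) (x : 'I_n.+2 -> M) : 'I_n.+1 -> M :=
  fun j => x (lift i j).

Definition bdry (n : nat) (mu : set ('I_n.+2 -> M) -> R[i])
  : set ('I_n.+1 -> M) -> R[i] :=
  fun B => \sum_(i < n.+2) (-1) ^+ i * extv (dmax n.+1) mu (face n i @^-1` B).

(* relative n-cycles of CX(A)/CX(B) (all chains are cycles in degree 0) *)
Definition rcycle (A B : set (set M)) (n : nat)
  : (set ('I_n.+1 -> M) -> R[i]) -> Prop :=
  match n with
  | 0 => fun mu => CX 0 A mu
  | m.+1 => fun mu => CX m.+1 A mu /\ CX m B (bdry m mu)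
  end.

Definition rbdry (A B : set (set M)) (n : nat) (mu : set ('I_n.+1 -> M) -> R[i]) :=
  exists2 nu, CX n.+1 A nu & CX n B (mu \- bdry n nu).

Definition big_family (F : set (set M)) : Prop :=
  [/\ F set0,
      (forall Y Y', F Y -> Y' `<=` Y -> F Y'),
      (forall Y Y', F Y -> F Y' -> F (Y `|` Y')) &
      (forall (r : R) Y, 0 <= r -> F Y -> F (thick d r Y))].

End Coarse.

Definition fcap {M : Type} (F G : set (set M)) : set (set M) :=
  [set S | exists X Y, [/\ F X, G Y & S = X `&` Y]].
Definition fcup {M : Type} (F G : set (set M)) : set (set M) :=
  [set S | exists X Y, [/\ F X, G Y & S = X `|` Y]].

From mathcomp Require Import all_boot all_order all_algebra.
From mathcomp Require Import all_classical all_reals all_analysis.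
From mathcomp Require Import complex.
From mathcomp Require Import lra.
Import Order.TTheory GRing.Theory Num.Theory numFieldNormedType.Exports.
Local Open Scope ring_scope.
Local Open Scope classical_set_scope.

(* A chain of CX(X ⋓ W) lives on X1^{n+1} ∪ W1^{n+1} inside Δ_r.  Restricting
   it to (cl X1)^{n+1} gives a chain of CX(X); the remainder lives on simplices
   of width ≤ 2r that meet W1 outside cl X1, hence on ((W1)_{2r+2})^{n+1}, so it
   is a chain of CX(W), which vanishes in the target quotient.  Both injectivity
   and surjectivity then reduce to CX(X) ∩ CX((X ⋒ Z) ⋓ W) ⊆ CX(X ⋒ Z): for a
   chain supported on Y1 ∈ X and on (X3 ∩ Z3) ∪ W3, the hypothesis puts
   cl Y1 ∩ W3 in X ⋒ Z, and the chain lives on (cl Y1 ∩ Z3) ∪ (cl Y1 ∩ W3).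
   Boundaries are pushforwards along the faces of the restriction to the closed
   set Δ_r; there the faces are 1-Lipschitz and pull bounded sets back to
   bounded sets, so they preserve locally finite regular Borel measures. *)

Section MetricSpace.
Context {R : realType} {T : Type} {D : T -> T -> R}.

Lemma dboundedS {A B} : A `<=` B -> dbounded D B -> dbounded D A.
Proof. by move=> sAB [r hr]; exists r => x y /sAB hx /sAB hy; apply: hr. Qed.

Lemma dbounded0 : dbounded D set0. Proof. by exists 0 => x y []. Qed.

Lemma dopen0 : dopen D set0. Proof. by move=> x []. Qed.

Lemma dopenI {U V} : dopen D U -> dopen D V -> dopen D (U `&` V).
Proof.
move=> hU hV x [Ux Vx].
have [e1 e10 s1] := hU x Ux; have [e2 e20 s2] := hV x Vx.
exists (Num.min e1 e2); first by rewrite lt_min e10 e20.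
by move=> y /= hy; split; [apply: s1|apply: s2];
  apply: lt_le_trans hy _; rewrite ge_min lexx ?orbT.
Qed.

Lemma dborel_open {U} : dopen D U -> dborel D U.
Proof. exact: sub_sigma_algebra. Qed.

Lemma dborel0 : dborel D set0. Proof. exact: sigma_algebra0. Qed.

Lemma dborelC {A} : dborel D A -> dborel D (~` A).
Proof. by move=> hA; rewrite -setTD; apply: sigma_algebraCD. Qed.

Lemma dborel_bigcup {F : nat -> set T} :
  (forall k, dborel D (F k)) -> dborel D (\bigcup_k F k).
Proof. exact: sigma_algebra_bigcup. Qed.

Lemma dborelU {A B} : dborel D A -> dborel D B -> dborel D (A `|` B).
Proof.
move=> hA hB; rewrite -bigcup2E; apply: dborel_bigcup => -[|[|k]] //=.
exact: dborel0.
Qed.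

Lemma dborelI {A B} : dborel D A -> dborel D B -> dborel D (A `&` B).
Proof.
move=> hA hB; rewrite -(setCK (A `&` B)) setCI.
by apply: dborelC; apply: dborelU; apply: dborelC.
Qed.

Lemma dborelD {A B} : dborel D A -> dborel D B -> dborel D (A `\` B).
Proof. by move=> hA hB; rewrite setDE; apply: dborelI => //; apply: dborelC. Qed.

Lemma dborel_closed {K} : dclosed D K -> dborel D K.
Proof. by move=> hK; rewrite -(setCK K); apply: dborelC; apply: dborel_open. Qed.

Lemma bborelS {A B} : dborel D A -> A `<=` B -> dbounded D B -> bborel D A.
Proof. by move=> hA sAB hB; split => //; apply: dboundedS sAB hB. Qed.

Lemma dcompact0 : dcompact D set0.
Proof. by move=> I U _ _; exists set0; split => // x []. Qed.

Lemma dcompactU {K1 K2} : dcompact D K1 -> dcompact D K2 -> dcompact D (K1 `|` K2).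
Proof.
move=> h1 h2 I U oU cov.
have [F1 [fF1 c1]] := h1 I U oU (subset_trans (@subsetUl _ K1 K2) cov).
have [F2 [fF2 c2]] := h2 I U oU (subset_trans (@subsetUr _ K1 K2) cov).
exists (F1 `|` F2); split; first by rewrite finite_setU.
by move=> x [/c1|/c2] [i Fi Ux]; exists i => //; [left|right].
Qed.

Hypothesis hD : is_metric D.

Lemma dist_ge0 x y : 0 <= D x y. Proof. by case: hD. Qed.
Lemma dist_eq0 x y : D x y = 0 <-> x = y. Proof. by case: hD. Qed.
Lemma dist_xx x : D x x = 0. Proof. exact/dist_eq0. Qed.
Lemma dist_sym x y : D x y = D y x. Proof. by case: hD. Qed.
Lemma dist_triangle x y z : D x z <= D x y + D y z. Proof. by case: hD. Qed.

Lemma dopen_ball a r : dopen D [set y | D a y < r].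
Proof.
move=> y /= hy; exists (r - D a y); first by rewrite subr_gt0.
by move=> z /= hz; apply: le_lt_trans (dist_triangle a y z) _; rewrite -ltrBrDl.
Qed.

Lemma dboundedU {A B} : dbounded D A -> dbounded D B -> dbounded D (A `|` B).
Proof.
move=> [r1 h1] [r2 h2].
have [[a Aa]|nA] := pselect (exists a, A a); last first.
  apply: (@dboundedS _ B); last by exists r2.
  by move=> x [Ax|//]; case: nA; exists x.
have [[b Bb]|nB] := pselect (exists b, B b); last first.
  apply: (@dboundedS _ A); last by exists r1.
  by move=> x [//|Bx]; case: nB; exists x.
exists (r1 + r2 + 2 * D a b) => x y hx hy.
have := h1 _ _ Aa Aa; have := h2 _ _ Bb Bb; have := dist_ge0 a a.
have := dist_ge0 b b; have := dist_ge0 a b; have := dist_sym a b.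
case: hx => hx; case: hy => hy.
- by have := h1 _ _ hx hy; lra.
- have := dist_triangle x a y; have := dist_triangle a b y.
  by have := h1 _ _ hx Aa; have := h2 _ _ Bb hy; lra.
- have := dist_triangle x b y; have := dist_triangle b a y.
  by have := h2 _ _ hx Bb; have := h1 _ _ Aa hy; lra.
- by have := h2 _ _ hx hy; lra.
Qed.

Lemma dbounded_open {A} : dbounded D A ->
  exists U, [/\ dopen D U, dbounded D U & A `<=` U].
Proof.
move=> [r hr]; have [[a Aa]|nA] := pselect (exists a, A a); last first.
  by exists set0; split; [exact: dopen0|exact: dbounded0|move=> x Ax; apply: nA; exists x].
exists [set y | D a y < r + 1]; split; first exact: dopen_ball.
  exists (2 * (r + 1)) => x y /= hx hy.
  by have := dist_triangle x a y; rewrite (dist_sym x a); lra.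
by move=> x /= Ax; have := hr _ _ Aa Ax; lra.
Qed.

Lemma dcompact_closed {K} : dcompact D K -> dclosed D K.
Proof.
move=> hK x nKx; pose U (m : nat) := [set y | m.+1%:R^-1 < D x y].
have oU m : dopen D (U m).
  move=> y /= hy; exists (D x y - m.+1%:R^-1); first by rewrite subr_gt0.
  move=> z /= hz; rewrite /U /=; have := dist_triangle x z y.
  by rewrite (dist_sym y z) in hz; set c := m.+1%:R^-1 in hz *; lra.
have cov : K `<=` \bigcup_(m in [set: nat]) U m.
  move=> y Ky; have dpos : 0 < D x y.
    rewrite lt_def dist_ge0 andbT; apply/eqP => /dist_eq0 exy.
    by apply: nKx; rewrite exy.
  exists (Num.truncn (D x y)^-1) => //=.
  by rewrite /U /= invf_plt ?posrE ?ltr0n //; exact: truncnS_gt.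
have [F [/finite_fsetP [B eFB] cF]] := hK nat U oU cov.
pose N := (\max_(m <- finmap.enum_fset B) m)%N.
exists N.+1%:R^-1; first by rewrite invr_gt0 ltr0n.
move=> y /= hy Ky; have [m Fm] := cF y Ky; rewrite /U /=; apply/negP; rewrite -leNgt.
apply: le_trans (ltW hy) _; rewrite lef_pV2 ?posrE ?ltr0n // ler_nat.
by rewrite eFB in Fm; exact: (@leq_bigmax_seq _ _ xpredT id m).
Qed.

End MetricSpace.

Section NonexpansiveMap.
Context {R : realType} {T1 T2 : Type} {D1 : T1 -> T1 -> R} {D2 : T2 -> T2 -> R}.
Context {f : T1 -> T2}.
Hypothesis f_nonexpansive : forall x y, D2 (f x) (f y) <= D1 x y.

Lemma dopen_preimage {U} : dopen D2 U -> dopen D1 (f @^-1` U).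
Proof.
move=> hU x /= Ufx; have [e e0 s] := hU _ Ufx; exists e => // y /= hy.
by apply: s; apply: le_lt_trans (f_nonexpansive x y) hy.
Qed.

Lemma dborel_preimage {B} : dborel D2 B -> dborel D1 (f @^-1` B).
Proof.
move=> hB; apply: (hB [set B | dborel D1 (f @^-1` B)]); split.
- split => /=; first by rewrite preimage_set0; exact: dborel0.
    by move=> A hA; rewrite setTD -preimage_setC; exact: dborelC.
  by move=> F hF; rewrite preimage_bigcup; apply: dborel_bigcup.
- by move=> U /= hU; apply: dborel_open; apply: dopen_preimage.
Qed.

Lemma dcompact_image {K} : dcompact D1 K -> dcompact D2 (f @` K).
Proof.
move=> hK I U oU cov.
have [F [fF cF]] := hK I (fun i => f @^-1` U i) (fun i => dopen_preimage (oU i))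
  (fun x Kx => cov (f x) (ex_intro2 _ _ x Kx erefl)).
by exists F; split => // _ [x /cF + <-].
Qed.

End NonexpansiveMap.

Section Thickening.
Context {R : realType} {T : Type} {D : T -> T -> R}.

Lemma thick_le r1 r2 Y : r1 <= r2 -> thick D r1 Y `<=` thick D r2 Y.
Proof. by move=> hr x hx e e0; have [y Yy hy] := hx e e0; exists y => //; lra. Qed.

Hypothesis hD : is_metric D.

Lemma subset_thick r Y : 0 <= r -> Y `<=` thick D r Y.
Proof. by move=> r0 y Yy e e0; exists y => //; rewrite dist_xx //; lra. Qed.

Lemma dclosed_thick r Y : dclosed D (thick D r Y).
Proof.
move=> x nx.
have [[e [e0 he]]|ne] :=
  pselect (exists e, 0 < e /\ forall y, Y y -> r + e <= D x y); last first.
  exfalso; apply: nx => e e0.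
  apply: contra_notP ne => nh; exists e; split => // y Yy.
  by rewrite leNgt; apply/negP => h; apply: nh; exists y.
exists (e / 2); first by rewrite divr_gt0.
move=> z /= hz tz; have [|y Yy hy] := tz (e / 2); first by rewrite divr_gt0.
by have := he y Yy; have := dist_triangle hD x z y; lra.
Qed.

End Thickening.

Section MaxMetric.
Context {R : realType} {M : Type} {d : M -> M -> R}.

Lemma le_dmax {n} (x y : 'I_n.+1 -> M) i : d (x i) (y i) <= dmax d n x y.
Proof. exact: (le_bigmax _ (fun i => d (x i) (y i))). Qed.

Lemma dmax_le {n} (x y : 'I_n.+1 -> M) c :
  0 <= c -> (forall i, d (x i) (y i) <= c) -> dmax d n x y <= c.
Proof. by move=> c0 h; apply: bigmax_le. Qed.

Lemma cpowS {n} {Y Y' : set M} : Y `<=` Y' -> cpow Y n `<=` cpow Y' n.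
Proof. by move=> sY x h i; apply: sY. Qed.

Lemma Delta_le {n r1 r2} : r1 <= r2 -> Delta d n r1 `<=` Delta d n r2.
Proof. exact: thick_le. Qed.

Lemma dclosed_cpow {n Y} : dclosed d Y -> dclosed (dmax d n) (cpow Y n).
Proof.
move=> hY x nx; have [i ni] : exists i, ~ Y (x i).
  by apply: contra_notP nx => /forallNP h i; apply: contrapT (h i).
have [e e0 s] := hY _ ni; exists e => // z /= hz cz.
exact: s (z i) (le_lt_trans (le_dmax x z i) hz) (cz i).
Qed.

Hypothesis hd : is_metric d.

Lemma dmax_ge0 {n} (x y : 'I_n.+1 -> M) : 0 <= dmax d n x y.
Proof. exact: le_trans (dist_ge0 hd _ _) (le_dmax x y ord0). Qed.

Lemma dmax_metric n : is_metric (dmax d n).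
Proof.
split=> [x y|x y|x y|x y z]; first exact: dmax_ge0.
- split=> [h|->]; last first.
    by apply/eqP; rewrite eq_le dmax_ge0 dmax_le // => i; rewrite (dist_xx hd).
  apply: funext => i; apply/(dist_eq0 hd)/eqP.
  by rewrite eq_le (dist_ge0 hd) -h le_dmax.
- by apply/eqP; rewrite eq_le !dmax_le ?dmax_ge0 // => i;
    rewrite (dist_sym hd); apply: le_dmax.
- apply: dmax_le => [|i]; first by rewrite addr_ge0 ?dmax_ge0.
  exact: le_trans (dist_triangle hd _ (y i) _) (lerD (le_dmax x y i) (le_dmax y z i)).
Qed.

Lemma dmax_face {n} (i : 'I_n.+2) x y :
  dmax d n (face n i x) (face n i y) <= dmax d n.+1 x y.
Proof. by apply: dmax_le => [|j]; [exact: dmax_ge0|exact: (le_dmax x y (lift i j))]. Qed.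

Lemma dclosed_Delta n r : dclosed (dmax d n) (Delta d n r).
Proof. exact: (dclosed_thick (dmax_metric n)). Qed.

Lemma Delta_face n r (i : 'I_n.+2) x : Delta d n.+1 r x -> Delta d n r (face n i x).
Proof.
move=> hx e e0; have [y [m hm] hy] := hx e e0.
exists (face n i y); first by exists m => j; rewrite /face hm.
exact: le_lt_trans (dmax_face i x y) hy.
Qed.

Lemma Delta_dist {n r} {x : 'I_n.+1 -> M} i j {e} : Delta d n r x -> 0 < e ->
  d (x i) (x j) < 2 * r + 2 * e.
Proof.
move=> hx e0; have [y [m hm] hy] := hx e e0.
have := le_lt_trans (le_dmax x y i) hy; have := le_lt_trans (le_dmax x y j) hy.
rewrite !hm (dist_sym hd (x j)) => h1 h2.
by have := dist_triangle hd (x i) m (x j); lra.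
Qed.

Lemma dbounded_face_Delta n r (i : 'I_n.+2) B : dbounded (dmax d n) B ->
  dbounded (dmax d n.+1) (face n i @^-1` B `&` Delta d n.+1 r).
Proof.
move=> [b hb]; exists (4 * r + 4 + b) => x y [Bx Dx] [By Dy].
have b0 := le_trans (dmax_ge0 _ _) (hb _ _ Bx By).
apply: dmax_le => [|k].
  by have := Delta_dist ord0 ord0 Dx ltr01; have := dist_ge0 hd (x ord0) (x ord0); lra.
pose j := lift i ord0; have hj : d (x j) (y j) <= b.
  exact: le_trans (le_dmax (face n i x) (face n i y) ord0) (hb _ _ Bx By).
have := Delta_dist k j Dx ltr01; have := Delta_dist j k Dy ltr01.
by have := dist_triangle hd (x k) (x j) (y k);
  have := dist_triangle hd (x j) (y j) (y k); lra.
Qed.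

End MaxMetric.

Section ComplexParts.
Context {R : realType}.
Implicit Types a b z : R[i].
Local Open Scope complex_scope.

Lemma complex_ext a b :
  complex.Re a = complex.Re b -> complex.Im a = complex.Im b -> a = b.
Proof. by move=> hRe hIm; apply/eqP; rewrite eq_complex hRe hIm !eqxx. Qed.

Lemma ReD a b : complex.Re (a + b) = complex.Re a + complex.Re b.
Proof. exact: (raddfD (@complex.Re R : Rcomplex R -> R)). Qed.

Lemma ImD a b : complex.Im (a + b) = complex.Im a + complex.Im b.
Proof. exact: (raddfD (@complex.Im R : Rcomplex R -> R)). Qed.

Lemma ReN a : complex.Re (- a) = - complex.Re a.
Proof. exact: (raddfN (@complex.Re R : Rcomplex R -> R)). Qed.

Lemma ImN a : complex.Im (- a) = - complex.Im a.
Proof. exact: (raddfN (@complex.Im R : Rcomplex R -> R)). Qed.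

Lemma Re_sum (I : Type) (s : seq I) (P : pred I) (F : I -> R[i]) :
  complex.Re (\sum_(i <- s | P i) F i) = \sum_(i <- s | P i) complex.Re (F i).
Proof. exact: (raddf_sum (@complex.Re R : Rcomplex R -> R)). Qed.

Lemma Im_sum (I : Type) (s : seq I) (P : pred I) (F : I -> R[i]) :
  complex.Im (\sum_(i <- s | P i) F i) = \sum_(i <- s | P i) complex.Im (F i).
Proof. exact: (raddf_sum (@complex.Im R : Rcomplex R -> R)). Qed.

Lemma cabsE z : (cabs z)%:C = `|z|.
Proof. by rewrite normc_def. Qed.

Lemma cabsD a b : cabs (a + b) <= cabs a + cabs b.
Proof. by rewrite -lecR rmorphD /= !cabsE ler_normD. Qed.

Lemma cabsN z : cabs (- z) = cabs z.
Proof. by apply: complexI; rewrite !cabsE normrN. Qed.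

Lemma cabs0 : cabs (0 : R[i]) = 0.
Proof. by apply: complexI; rewrite cabsE normr0. Qed.

End ComplexParts.

Lemma trivIset_preimage {T1 T2 : Type} (f : T1 -> T2) {F : nat -> set T2} :
  trivIset setT F -> trivIset setT (fun k => f @^-1` F k).
Proof. by move=> hF i j _ _ [x [Fi Fj]]; apply: hF => //; exists (f x). Qed.

Lemma cvg_eventually_cst {R : realType} m {u : nat -> R} {a b : R} :
  u N @[N --> \oo] --> a -> (forall N, (m <= N)%N -> u N = b) -> a = b.
Proof.
move=> ha hb; have hb' : u N @[N --> \oo] --> b.
  by apply: cvg_near_cst; exists m => // N /= hN; exact: hb.
exact: cvg_unique _ ha hb'.
Qed.

Definition agree_bborel {R : realType} {T : Type} (D : T -> T -> R)
  (mu nu : set T -> R[i]) : Prop :=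
  forall A, bborel D A -> mu A = nu A.

Section ComplexMeasure.
Context {R : realType} {T : Type} {D : T -> T -> R}.
Local Notation cmeasure := (lf_reg_borel_cmeasure D).
Implicit Types (mu nu : set T -> R[i]) (A B S : set T).

Lemma vanishes_onS {mu S} S' : S' `<=` S -> vanishes_on D mu S -> vanishes_on D mu S'.
Proof. by move=> sS h A hA sA; apply: h => // x /sA /sS. Qed.

Lemma vanishes_onD {mu nu S} : vanishes_on D mu S -> vanishes_on D nu S ->
  vanishes_on D (mu \+ nu) S.
Proof. by move=> h1 h2 A hA sA; rewrite /= h1 // h2 // addr0. Qed.

Lemma vanishes_onB {mu nu S} : vanishes_on D mu S -> vanishes_on D nu S ->
  vanishes_on D (mu \- nu) S.
Proof. by move=> h1 h2 A hA sA; rewrite /= h1 // h2 // subrr. Qed.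

Lemma vanishes_on_agree {mu nu S} : agree_bborel D mu nu ->
  vanishes_on D mu S -> vanishes_on D nu S.
Proof. by move=> e h A hA sA; rewrite -e // h. Qed.

Lemma var_leS {mu S} S' {e} : S' `<=` S -> var_le D mu S e -> var_le D mu S' e.
Proof.
move=> sS v F hF; apply: v => k.
by split; [exact: (hF k).1|apply: subset_trans (hF k).2 sS].
Qed.

Lemma var_leD {mu nu S e1 e2} : var_le D mu S e1 -> var_le D nu S e2 ->
  var_le D (mu \+ nu) S (e1 + e2).
Proof.
move=> v1 v2 F hF ht N; apply: le_trans (ler_sum _ (fun k _ => cabsD _ _)) _.
by rewrite big_split /=; exact: lerD (v1 F hF ht N) (v2 F hF ht N).
Qed.

Lemma var_leN {mu S e} : var_le D mu S e -> var_le D (\- mu) S e.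
Proof.
move=> v F hF ht N; rewrite (eq_bigr (fun k : 'I_N => cabs (mu (F k)))) => [|k _].
  exact: v.
exact: cabsN.
Qed.

Lemma var_le_agree {mu nu S e} : dbounded D S -> agree_bborel D mu nu ->
  var_le D mu S e -> var_le D nu S e.
Proof.
move=> bS emn v F hF ht N; rewrite (eq_bigr (fun k : 'I_N => cabs (mu (F k)))) => [|k _].
  exact: v.
by rewrite emn //; exact: bborelS (hF k).1 (hF k).2 bS.
Qed.

Lemma cmeasure_agree {mu nu} : agree_bborel D mu nu -> cmeasure mu -> cmeasure nu.
Proof.
move=> emn [hs hr]; split.
- move=> F hF ht hb; have [h1 h2] := hs F hF ht hb.
  have eF k : mu (F k) = nu (F k).
    by apply: emn; apply: bborelS (hF k) _ hb => x Fx; exists k.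
  rewrite -emn; last by split => //; exact: dborel_bigcup.
  by split; [move: h1|move: h2]; under eq_fun do under eq_bigr do rewrite eF.
- move=> A hA eps eps0; have [K [U [hK hU bU sKU hv]]] := hr A hA eps eps0.
  by exists K, U; split => //; apply: var_le_agree emn hv; apply: dboundedS bU.
Qed.

Lemma cmeasure0 {mu} : cmeasure mu -> mu set0 = 0.
Proof.
case=> hs _; have [] := hs (fun=> set0) (fun=> dborel0) (@trivIset_set0 nat T setT).
  by rewrite bigcup0 //; exact: dbounded0.
rewrite bigcup0 // => hRe hIm.
have const0 (c : R) : (\sum_(k < N) c) @[N --> \oo] --> c -> c = 0.
  move=> h; have : cvgn (series (fun _ : nat => c)).
    by apply/cvg_ex; exists c; rewrite seriesEord.
  by move/cvg_series_cvg_0 => h0; exact: cvg_unique (cvg_cst c) h0.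
by apply: complex_ext; apply: const0.
Qed.

Lemma cmeasureD {mu nu} : cmeasure mu -> cmeasure nu -> cmeasure (mu \+ nu).
Proof.
move=> [hs1 hr1] [hs2 hr2]; split.
- move=> F hF ht hb; have [a1 a2] := hs1 F hF ht hb; have [b1 b2] := hs2 F hF ht hb.
  split; rewrite /= ?ReD ?ImD;
    [apply: cvg_trans _ (cvgD a1 b1)|apply: cvg_trans _ (cvgD a2 b2)];
    apply: near_eq_cvg; apply: nearW => N; rewrite fctE -big_split;
    by apply: eq_bigr => k _; rewrite ?ReD ?ImD.
- move=> A hA eps e0; have e2 : 0 < eps / 2 by rewrite divr_gt0.
  have [K1 [U1 [hK1 oU1 bU1 [sK1 sU1] v1]]] := hr1 A hA _ e2.
  have [K2 [U2 [hK2 oU2 bU2 [sK2 sU2] v2]]] := hr2 A hA _ e2.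
  exists (K1 `|` K2), (U1 `&` U2); split.
  + exact: dcompactU.
  + exact: dopenI.
  + exact: dboundedS (@subIsetl _ _ _) bU1.
  + by split=> [x [/sK1|/sK2] //|x Ax]; split; [apply: sU1|apply: sU2].
  + rewrite (splitr eps); apply: var_leD.
      by apply: var_leS v1 => x [[? _] nK]; split => // ?; apply: nK; left.
    by apply: var_leS v2 => x [[_ ?] nK]; split => // ?; apply: nK; right.
Qed.

Lemma cmeasureN {mu} : cmeasure mu -> cmeasure (\- mu).
Proof.
move=> [hs hr]; split.
- move=> F hF ht hb; have [a1 a2] := hs F hF ht hb.
  split; rewrite /= ?ReN ?ImN;
    [apply: cvg_trans _ (cvgN a1)|apply: cvg_trans _ (cvgN a2)];
    apply: near_eq_cvg; apply: nearW => N; rewrite fctE -sumrN;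
    by apply: eq_bigr => k _; rewrite ?ReN ?ImN.
- move=> A hA eps e0; have [K [U [hK oU bU sKU hv]]] := hr A hA _ e0.
  by exists K, U; split => //; exact: var_leN.
Qed.

Lemma cmeasureB {mu nu} : cmeasure mu -> cmeasure nu -> cmeasure (mu \- nu).
Proof. by move=> h1 h2; apply: cmeasure_agree (cmeasureD h1 (cmeasureN h2)). Qed.

Lemma cmeasure_sign (k : nat) {mu} :
  cmeasure mu -> cmeasure (fun A => (-1) ^+ k * mu A).
Proof.
move=> hmu; rewrite -signr_odd; case: (odd k).
  by apply: cmeasure_agree (cmeasureN hmu) => A _ /=; rewrite expr1 mulN1r.
by apply: cmeasure_agree hmu => A _ /=; rewrite expr0 mul1r.
Qed.

Hypothesis hD : is_metric D.

Lemma cmeasureU {mu A B} : cmeasure mu -> bborel D A -> bborel D B ->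
  A `&` B = set0 -> mu (A `|` B) = mu A + mu B.
Proof.
move=> hmu [bA bA'] [bB bB'] AB0; pose F := bigcup2 A B.
have hF k : dborel D (F k) by case: k => [|[|k]] //=; exact: dborel0.
have ht : trivIset setT F by rewrite -trivIset_bigcup2.
have hb : dbounded D (\bigcup_k F k) by rewrite bigcup2E; exact: dboundedU.
have [hRe hIm] := hmu.1 F hF ht hb; rewrite bigcup2E in hRe hIm.
have sumF N : (2 <= N)%N -> \sum_(k < N) mu (F k) = mu A + mu B.
  move=> hN; rewrite (bigID (fun k : 'I_N => (k < 2)%N)) /= [X in _ + X]big1.
    by rewrite addr0 -(big_ord_widen N (fun k => mu (F k)) hN) big_ord_recr big_ord1.
  by case=> [[|[|k]]] //= _ _; exact: cmeasure0.
by apply: complex_ext;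
  [apply: (cvg_eventually_cst 2 hRe)|apply: (cvg_eventually_cst 2 hIm)] => N hN;
  rewrite -?Re_sum -?Im_sum sumF.
Qed.

Lemma cmeasure_splitI {mu A B} : cmeasure mu -> bborel D A -> dborel D B ->
  mu A = mu (A `&` B) + mu (A `\` B).
Proof.
move=> hmu [bA bA'] bB; rewrite -{1}(setUIDK A B) cmeasureU //.
- exact: bborelS (dborelI bA bB) (@subIsetl _ _ _) bA'.
- exact: bborelS (dborelD bA bB) (@subDsetl _ _ _) bA'.
- by apply/seteqP; split => x // [[_ h1] [_ h2]].
Qed.

Lemma ext_val_unique {mu S c1 c2} : cmeasure mu ->
  ext_val D mu S c1 -> ext_val D mu S c2 -> c1 = c2.
Proof.
move=> hmu [A1 [hA1 sA1 v1 <-]] [A2 [hA2 sA2 v2 <-]].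
have z12 : mu (A1 `\` A2) = 0.
  apply: v2; last by move=> x [/sA1 ? ?].
  exact: bborelS (dborelD hA1.1 hA2.1) (@subDsetl _ _ _) hA1.2.
have z21 : mu (A2 `\` A1) = 0.
  apply: v1; last by move=> x [/sA2 ? ?].
  exact: bborelS (dborelD hA2.1 hA1.1) (@subDsetl _ _ _) hA2.2.
by rewrite (cmeasure_splitI hmu hA1 hA2.1) (cmeasure_splitI hmu hA2 hA1.1) setIC z12 z21.
Qed.

Lemma extvE {mu S c} : cmeasure mu -> ext_val D mu S c -> extv D mu S = c.
Proof.
by move=> hmu hc; apply: xget_unique => // c' hc'; exact: ext_val_unique hc' hc.
Qed.

Lemma vanishes_onU {mu S1 S2} : cmeasure mu -> dborel D S1 ->
  vanishes_on D mu S1 -> vanishes_on D mu S2 -> vanishes_on D mu (S1 `|` S2).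
Proof.
move=> hmu b1 h1 h2 A hA sA; rewrite (cmeasure_splitI hmu hA b1) h1 ?h2 ?addr0 //.
- exact: bborelS (dborelD hA.1 b1) (@subDsetl _ _ _) hA.2.
- by move=> x [/sA [] // ? ?].
- exact: bborelS (dborelI hA.1 b1) (@subIsetl _ _ _) hA.2.
Qed.

Lemma var_le_splitI {mu S} B {e1 e2} : cmeasure mu -> dbounded D S -> dborel D B ->
  var_le D mu (S `&` B) e1 -> var_le D mu (S `\` B) e2 -> var_le D mu S (e1 + e2).
Proof.
move=> hmu bS hB v1 v2 F hF ht N.
rewrite (eq_bigr (fun k : 'I_N => cabs (mu (F k `&` B) + mu (F k `\` B)))); last first.
  by move=> k _; rewrite -cmeasure_splitI //; exact: bborelS (hF k).1 (hF k).2 bS.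
apply: le_trans (ler_sum _ (fun k _ => cabsD _ _)) _; rewrite big_split /= lerD //.
  apply: (v1 (fun k => F k `&` B)) => [k|]; last exact: trivIset_setIr.
  by split; [exact: dborelI (hF k).1 hB|move=> x [/(hF k).2 ? ?]].
apply: (v2 (fun k => F k `\` B)) => [k|].
  by split; [exact: dborelD (hF k).1 hB|move=> x [/(hF k).2 ? ?]].
exact: (trivIset_setIr (G := fun=> ~` B)).
Qed.

Lemma cmeasure_zero : cmeasure (fun _ => 0).
Proof.
split=> [F hF ht hb|A [_ hA] eps eps0].
  by split; apply: cvg_near_cst; apply: nearW => N; rewrite big1.
have [U [oU bU sU]] := dbounded_open hD hA.
exists set0, U; split => //; first exact: dcompact0.
  by split => // x [].
by move=> F _ _ N; rewrite big1 ?ltW // => k _; exact: cabs0.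
Qed.

Lemma cmeasure_sum (I : Type) (s : seq I) (F : I -> set T -> R[i]) :
  (forall i, cmeasure (F i)) -> cmeasure (fun A => \sum_(i <- s) F i A).
Proof.
move=> hF; elim: s => [|i s IH].
  by apply: cmeasure_agree cmeasure_zero => A _ /=; rewrite big_nil.
by apply: cmeasure_agree (cmeasureD (hF i) IH) => A _ /=; rewrite big_cons.
Qed.

End ComplexMeasure.

Definition push_on {R : realType} {T1 T2 : Type} (f : T1 -> T2) (L : set T1)
  (mu : set T1 -> R[i]) (B : set T2) : R[i] := mu (f @^-1` B `&` L).

Section Pushforward.
Context {R : realType} {T1 T2 : Type} {D1 : T1 -> T1 -> R} {D2 : T2 -> T2 -> R}.
Context {f : T1 -> T2} {L : set T1}.
Hypotheses (hD1 : is_metric D1) (hD2 : is_metric D2).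
Hypothesis f_nonexpansive : forall x y, D2 (f x) (f y) <= D1 x y.
Hypothesis dclosed_L : dclosed D1 L.
Hypothesis dbounded_preimage :
  forall B, dbounded D2 B -> dbounded D1 (f @^-1` B `&` L).
Implicit Types (mu : set T1 -> R[i]).

Lemma dborel_preimage_on {B} : dborel D2 B -> dborel D1 (f @^-1` B `&` L).
Proof.
by move=> hB; apply: dborelI (dborel_preimage f_nonexpansive hB) (dborel_closed dclosed_L).
Qed.

Lemma bborel_preimage_on {B} : bborel D2 B -> bborel D1 (f @^-1` B `&` L).
Proof. by case=> hB bB; split; [exact: dborel_preimage_on|exact: dbounded_preimage]. Qed.

Lemma var_le_push {mu S e} :
  var_le D1 mu (f @^-1` S `&` L) e -> var_le D2 (push_on f L mu) S e.
Proof.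
move=> v F hF ht N; apply: (v (fun k => f @^-1` F k `&` L)) => [k|].
  by split; [exact: dborel_preimage_on (hF k).1|move=> x [/(hF k).2 ? ?]].
exact: trivIset_setIr (trivIset_preimage f ht).
Qed.

Lemma csigma_additive_push {mu} :
  lf_reg_borel_cmeasure D1 mu -> csigma_additive D2 (push_on f L mu).
Proof.
move=> hmu F hF ht hb; rewrite /push_on preimage_bigcup setI_bigcupl.
apply: hmu.1 => [k||].
- exact: dborel_preimage_on.
- exact: trivIset_setIr (trivIset_preimage f ht).
- by rewrite -setI_bigcupl -preimage_bigcup; exact: dbounded_preimage.
Qed.

(* Inner approximation by the image of a compact subset of the preimage of A;
   outer approximation by a bounded open V around A minus the image of a
   compact subset of the preimage of V \ A. *)
Lemma cregular_push {mu} :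
  lf_reg_borel_cmeasure D1 mu -> cregular D2 (push_on f L mu).
Proof.
move=> hmu A hA eps e0; have e2 : 0 < eps / 2 by rewrite divr_gt0.
have [K1 [U1 [cK1 _ _ [sK1 sU1] v1]]] := hmu.2 _ (bborel_preimage_on hA) _ e2.
have [V [oV bV sAV]] := dbounded_open hD2 hA.2.
have hVA : bborel D2 (V `\` A).
  exact: bborelS (dborelD (dborel_open oV) hA.1) (@subDsetl _ _ _) bV.
have [K2 [U2 [cK2 _ _ [sK2 sU2] v2]]] := hmu.2 _ (bborel_preimage_on hVA) _ e2.
exists (f @` K1), (V `\` f @` K2); split.
- by apply: (dcompact_image f_nonexpansive).
- exact: dopenI oV (dcompact_closed hD2 (dcompact_image f_nonexpansive cK2)).
- exact: dboundedS (@subDsetl _ _ _) bV.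
- split; first by move=> _ [x /sK1 [? _] <-].
  by move=> a Aa; split; [exact: sAV|case=> x /sK2 [[_ nA] _] fx; apply: nA; rewrite fx].
- apply: var_le_push; rewrite (splitr eps).
  apply: (var_le_splitI hD1 (f @^-1` A)) => //.
  + by apply: (dboundedS _ (dbounded_preimage _ bV)) => x [[[? _] _] ?].
  + by apply: (dborel_preimage f_nonexpansive); case: hA.
  + apply: var_leS v1 => x [[[[_ nK2] nK1] Lx] Ax].
    by split=> [|K1x]; [exact: sU1|apply: nK1; exists x].
  + apply: var_leS v2 => x [[[[Vx nK2] nK1] Lx] nAx].
    by split=> [|K2x]; [exact: sU2|apply: nK2; exists x].
Qed.

Lemma cmeasure_push {mu} :
  lf_reg_borel_cmeasure D1 mu -> lf_reg_borel_cmeasure D2 (push_on f L mu).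
Proof. by move=> hmu; split; [exact: csigma_additive_push|exact: cregular_push]. Qed.

Lemma extv_push {mu B} : lf_reg_borel_cmeasure D1 mu ->
  vanishes_on D1 mu (~` L) -> bborel D2 B ->
  extv D1 mu (f @^-1` B) = push_on f L mu B.
Proof.
move=> hmu hv hB; apply: (extvE hD1 hmu); exists (f @^-1` B `&` L); split => //.
- exact: bborel_preimage_on.
- by apply: vanishes_onS hv => x [Bx nBLx] Lx; apply: nBLx.
Qed.

Lemma vanishes_on_push {mu S} S' : vanishes_on D1 mu S' ->
  (forall x, L x -> S (f x) -> S' x) -> vanishes_on D2 (push_on f L mu) S.
Proof.
move=> hv h A hA sA; apply: hv; first exact: bborel_preimage_on.
by move=> x [Ax Lx]; apply: h => //; apply: sA.
Qed.

End Pushforward.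

Lemma vanishes_on_restrictC {R : realType} {T : Type} {D : T -> T -> R} {L : set T}
  {mu : set T -> R[i]} : lf_reg_borel_cmeasure D mu ->
  vanishes_on D (push_on id L mu) (~` L).
Proof.
move=> hmu A _ sA; rewrite /push_on (_ : id @^-1` A `&` L = set0).
  exact: cmeasure0 hmu.
by apply/seteqP; split=> [x [/sA nL /nL]|].
Qed.

Section Restriction.
Context {R : realType} {T : Type} {D : T -> T -> R} (hD : is_metric D).
Context {L : set T} (dclosed_L : dclosed D L).
Implicit Types (mu : set T -> R[i]).

Let dbounded_restrict B : dbounded D B -> dbounded D (id @^-1` B `&` L).
Proof. exact: dboundedS (@subIsetl _ _ _). Qed.

Lemma cmeasure_restrict {mu} :
  lf_reg_borel_cmeasure D mu -> lf_reg_borel_cmeasure D (push_on id L mu).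
Proof.
exact: (cmeasure_push (f := id) hD hD (fun x y => lexx _) dclosed_L dbounded_restrict).
Qed.

Lemma vanishes_on_restrict {mu S} :
  vanishes_on D mu S -> vanishes_on D (push_on id L mu) S.
Proof.
move=> hv; exact: (vanishes_on_push (f := id) (fun x y => lexx _) dclosed_L
  dbounded_restrict S hv (fun x _ => id)).
Qed.

End Restriction.

Definition bdry_on {R : realType} {M : Type} (d : M -> M -> R) (n : nat) (r : R)
  (mu : set ('I_n.+2 -> M) -> R[i]) (B : set ('I_n.+1 -> M)) : R[i] :=
  \sum_(i < n.+2) (-1) ^+ i * push_on (face n i) (Delta d n.+1 r) mu B.

Section Boundary.
Context {R : realType} {M : Type} {d : M -> M -> R} (hd : is_metric d).
Local Notation cmeasure n := (lf_reg_borel_cmeasure (dmax d n)).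

Lemma cmeasure_push_face {n r} (i : 'I_n.+2) {mu} : cmeasure n.+1 mu ->
  cmeasure n (push_on (face n i) (Delta d n.+1 r) mu).
Proof.
exact: (cmeasure_push (dmax_metric hd n.+1) (dmax_metric hd n) (dmax_face hd i)
  (dclosed_Delta hd n.+1 r) (dbounded_face_Delta hd n r i)).
Qed.

Lemma bdryE {n r mu B} : cmeasure n.+1 mu ->
  vanishes_on (dmax d n.+1) mu (~` Delta d n.+1 r) -> bborel (dmax d n) B ->
  bdry d n mu B = bdry_on d n r mu B.
Proof.
move=> hmu hv hB; apply: eq_bigr => i _; congr (_ * _).
exact: (extv_push (dmax_metric hd n.+1) (dmax_face hd i) (dclosed_Delta hd n.+1 r)
  (dbounded_face_Delta hd n r i) hmu hv hB).
Qed.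

Lemma cmeasure_bdry_on {n r mu} : cmeasure n.+1 mu -> cmeasure n (bdry_on d n r mu).
Proof.
by rewrite /bdry_on => hmu; apply: (cmeasure_sum (dmax_metric hd n)) => i;
  apply/cmeasure_sign/cmeasure_push_face.
Qed.

Lemma vanishes_on_bdry {n r mu S} S' : cmeasure n.+1 mu ->
  vanishes_on (dmax d n.+1) mu (~` Delta d n.+1 r) ->
  vanishes_on (dmax d n.+1) mu S' ->
  (forall i x, Delta d n.+1 r x -> S (face n i x) -> S' x) ->
  vanishes_on (dmax d n) (bdry d n mu) S.
Proof.
move=> hmu hv hS' hSS' A hA sA; rewrite (bdryE hmu hv hA) /bdry_on big1 // => i _.
rewrite (vanishes_on_push (dmax_face hd i) (dclosed_Delta hd n.+1 r)
  (dbounded_face_Delta hd n r i) S' hS' (hSS' i)) ?mulr0 //.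
Qed.

Lemma CX_bdry {n F mu} : CX d n.+1 F mu -> CX d n F (bdry d n mu).
Proof.
move=> [[hmu [r hv]] [Y hY sY]]; split; first split.
- apply: cmeasure_agree (cmeasure_bdry_on (r := r) hmu) => B hB.
  by rewrite (bdryE hmu hv hB).
- exists r; apply: (vanishes_on_bdry _ hmu hv hv) => i x Dx nDx Dx'.
  exact/nDx/Delta_face.
- exists Y => //; apply: (vanishes_on_bdry _ hmu hv sY) => i x _ nYx Yx.
  by apply: nYx => j; exact: Yx.
Qed.

Lemma vanishes_on_Delta_le {n r1 r2} {mu : set ('I_n.+1 -> M) -> R[i]} :
  r1 <= r2 -> vanishes_on (dmax d n) mu (~` Delta d n r1) ->
  vanishes_on (dmax d n) mu (~` Delta d n r2).
Proof. by move=> hr; apply: vanishes_onS => x nx /(Delta_le hr). Qed.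

Lemma bdryB {n mu nu} : coarse_chain d n.+1 mu -> coarse_chain d n.+1 nu ->
  agree_bborel (dmax d n) (bdry d n (mu \- nu)) (bdry d n mu \- bdry d n nu).
Proof.
move=> [hmu [r1 v1]] [hnu [r2 v2]] B hB.
have r1r : r1 <= Num.max r1 r2 by rewrite le_max lexx.
have r2r : r2 <= Num.max r1 r2 by rewrite le_max lexx orbT.
have vr1 := vanishes_on_Delta_le r1r v1; have vr2 := vanishes_on_Delta_le r2r v2.
rewrite /= (bdryE (cmeasureB hmu hnu) (vanishes_onB vr1 vr2) hB).
rewrite (bdryE hmu vr1 hB) (bdryE hnu vr2 hB) -sumrB.
by apply: eq_bigr => i _; rewrite -mulrBr.
Qed.

Lemma bdry0 n : agree_bborel (dmax d n) (bdry d n (fun _ => 0)) (fun _ => 0).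
Proof.
move=> B hB; rewrite (bdryE (r := 0) (cmeasure_zero (dmax_metric hd n.+1))) //.
by rewrite /bdry_on big1 // => i _; rewrite /push_on mulr0.
Qed.

End Boundary.

Definition updirected {M : Type} (F : set (set M)) : Prop :=
  forall Y Y', F Y -> F Y' -> exists2 Z, F Z & Y `|` Y' `<=` Z.

Definition dominated {M : Type} (F G : set (set M)) : Prop :=
  forall Y, F Y -> exists2 Y', G Y' & Y `<=` Y'.

Section Families.
Context {R : realType} {M : Type} {d : M -> M -> R}.
Implicit Types F G X Z W : set (set M).

Lemma big_family_updirected {F} : big_family d F -> updirected F.
Proof. by case=> _ _ hU _ Y Y' h1 h2; exists (Y `|` Y') => //; apply: hU. Qed.

Lemma updirected_fcup {F G} : updirected F -> updirected G -> updirected (fcup F G).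
Proof.
move=> dF dG _ _ [X1 [W1 [hX1 hW1 ->]]] [X2 [W2 [hX2 hW2 ->]]].
have [X hX sX] := dF _ _ hX1 hX2; have [W hW sW] := dG _ _ hW1 hW2.
exists (X `|` W); first by exists X, W.
by move=> x [[?|?]|[?|?]]; [left; apply: sX; left|right; apply: sW; left
  |left; apply: sX; right|right; apply: sW; right].
Qed.

Lemma updirected_fcap {F G} : updirected F -> updirected G -> updirected (fcap F G).
Proof.
move=> dF dG _ _ [X1 [Z1 [hX1 hZ1 ->]]] [X2 [Z2 [hX2 hZ2 ->]]].
have [X hX sX] := dF _ _ hX1 hX2; have [Z hZ sZ] := dG _ _ hZ1 hZ2.
exists (X `&` Z); first by exists X, Z.
by move=> x [[??]|[??]]; split; [apply: sX; left|apply: sZ; left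
  |apply: sX; right|apply: sZ; right].
Qed.

Lemma dominated_fcupr {F G} : F set0 -> dominated G (fcup F G).
Proof. by move=> F0 Y hY; exists (set0 `|` Y); [exists set0, Y|move=> x; right]. Qed.

End Families.

Section Chains.
Context {R : realType} {M : Type} {d : M -> M -> R} (hd : is_metric d).
Implicit Types F G : set (set M).

Lemma supported_onS {n Y Y'} {mu : set ('I_n.+1 -> M) -> R[i]} :
  Y `<=` Y' -> supported_on d n Y mu -> supported_on d n Y' mu.
Proof. by move=> sY; apply: vanishes_onS => x nY'x /(cpowS sY). Qed.

Lemma CX_agree {n F mu nu} :
  agree_bborel (dmax d n) mu nu -> CX d n F mu -> CX d n F nu.
Proof.
move=> e [[hmu [r hv]] [Y hY sY]]; split; first split.
- exact: cmeasure_agree e hmu.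
- by exists r; apply: vanishes_on_agree e hv.
- by exists Y => //; apply: vanishes_on_agree e sY.
Qed.

Lemma CX_dominated {n F G mu} : dominated F G -> CX d n F mu -> CX d n G mu.
Proof.
move=> FG [hc [Y hY sY]]; split => //; have [Y' hY' sYY'] := FG Y hY.
by exists Y' => //; apply: supported_onS sYY' sY.
Qed.

Lemma CX_zero n F Y : F Y -> CX d n F (fun _ => 0).
Proof.
move=> hY; split; first by split; [exact: cmeasure_zero (dmax_metric hd n)|exists 0].
by exists Y.
Qed.

Lemma CX_common {n F} {mu nu : set ('I_n.+1 -> M) -> R[i]} : updirected F ->
  CX d n F mu -> CX d n F nu ->
  exists r Y, [/\ F Y, vanishes_on (dmax d n) mu (~` Delta d n r),
    vanishes_on (dmax d n) nu (~` Delta d n r),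
    supported_on d n Y mu & supported_on d n Y nu].
Proof.
move=> dF [[_ [r1 v1]] [Y1 hY1 s1]] [[_ [r2 v2]] [Y2 hY2 s2]].
have [Y hY sY] := dF _ _ hY1 hY2.
have r1r : r1 <= Num.max r1 r2 by rewrite le_max lexx.
have r2r : r2 <= Num.max r1 r2 by rewrite le_max lexx orbT.
exists (Num.max r1 r2), Y; split => //.
- exact: vanishes_on_Delta_le r1r v1.
- exact: vanishes_on_Delta_le r2r v2.
- by apply: supported_onS s1 => x Y1x; apply: sY; left.
- by apply: supported_onS s2 => x Y2x; apply: sY; right.
Qed.

Lemma CXD {n F mu nu} : updirected F ->
  CX d n F mu -> CX d n F nu -> CX d n F (mu \+ nu).
Proof.
move=> dF hmu hnu; have [r [Y [hY vmu vnu smu snu]]] := CX_common dF hmu hnu.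
split; first split; first exact: cmeasureD hmu.1.1 hnu.1.1.
  by exists r; exact: vanishes_onD.
by exists Y => //; exact: vanishes_onD.
Qed.

Lemma CXB {n F mu nu} : updirected F ->
  CX d n F mu -> CX d n F nu -> CX d n F (mu \- nu).
Proof.
move=> dF hmu hnu; have [r [Y [hY vmu vnu smu snu]]] := CX_common dF hmu hnu.
split; first split; first exact: cmeasureB hmu.1.1 hnu.1.1.
  by exists r; exact: vanishes_onB.
by exists Y => //; exact: vanishes_onB.
Qed.

Lemma rbdry_dominated {n F G W mu} : F set0 -> dominated W G ->
  CX d n W mu -> rbdry d F G n mu.
Proof.
move=> F0 WG hmu; exists (fun _ => 0); first exact: CX_zero F0.
apply: CX_agree (CX_dominated WG hmu) => B hB.
by rewrite /= (bdry0 hd n B hB) subr0.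
Qed.

Lemma rcycle_CX {F G n mu} :
  rcycle d F G n mu -> CX d n F mu.
Proof. by case: n mu => [|m] mu //= []. Qed.

End Chains.

Section Excision.
Context {R : realType} {M : Type} {d : M -> M -> R} (hd : is_metric d).

Lemma Delta_cpow_thick {k r} {X1 W1 C : set M} {x : 'I_k.+1 -> M} :
  X1 `<=` C -> Delta d k r x -> cpow (X1 `|` W1) k x -> ~ cpow C k x ->
  cpow (thick d (2 * r + 2) W1) k x.
Proof.
move=> sX Dx cx ncx; have [j nCj] : exists j, ~ C (x j).
  by apply: contra_notP ncx => /forallNP h j; apply: contrapT (h j).
have Wj : W1 (x j) by case: (cx j) => // /sX.
by move=> i e e0; exists (x j) => //; have := Delta_dist hd i j Dx ltr01; lra.
Qed.

Lemma CX_fcup_split {k X W mu} : big_family d X -> big_family d W ->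
  CX d k (fcup X W) mu ->
  exists2 muX, CX d k X muX & CX d k W (mu \- muX).
Proof.
move=> [_ _ _ thickX] [_ _ _ thickW] [[hmu [r hv]] [_ [X1 [W1 [hX1 hW1 ->]]] hsupp]].
pose r0 := Num.max r 0; have r00 : 0 <= r0 by rewrite le_max lexx orbT.
have hv0 : vanishes_on (dmax d k) mu (~` Delta d k r0).
  by apply: vanishes_on_Delta_le hv; rewrite le_max lexx.
(* [thick d 0 X1] is the closure of X1: restricting to a closed set keeps the
   measure regular. *)
pose C := thick d 0 X1; have hC : X C by exact: thickX.
have cC : dclosed (dmax d k) (cpow C k) := dclosed_cpow (dclosed_thick hd 0 X1).
have bC := dborel_closed cC.
exists (push_on id (cpow C k) mu).
  split; first split; first exact: (cmeasure_restrict (dmax_metric hd k) cC hmu).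
    by exists r0; exact: (vanishes_on_restrict cC hv0).
  by exists C => //; exact: (vanishes_on_restrictC hmu).
split; first split; first exact: (cmeasureB hmu (cmeasure_restrict (dmax_metric hd k) cC hmu)).
  by exists r0; exact: (vanishes_onB hv0 (vanishes_on_restrict cC hv0)).
exists (thick d (2 * r0 + 2) W1); first by apply: thickW => //; lra.
move=> A hA sA; rewrite /= (cmeasure_splitI (dmax_metric hd k) hmu hA bC).
rewrite /push_on [X in X - _]addrC addrK.
have bD := dborelC (dborel_closed (dclosed_Delta hd k r0)).
apply: (vanishes_onU (dmax_metric hd k) hmu bD hv0 hsupp).
  exact: bborelS (dborelD hA.1 bC) (@subDsetl _ _ _) hA.2.
move=> x [Ax nCx]; have [Dx|] := pselect (Delta d k r0 x); last by left.
right => cx; apply: (sA x Ax).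
exact: Delta_cpow_thick (subset_thick hd 0 X1 (lexx 0)) Dx cx nCx.
Qed.

Lemma CX_fcap_fcup {k X Z W sigma} : big_family d X -> big_family d Z ->
  fcap X W `<=` fcap X Z -> CX d k X sigma ->
  CX d k (fcup (fcap X Z) W) sigma -> CX d k (fcap X Z) sigma.
Proof.
move=> [_ _ cupX thickX] [_ _ cupZ _] hXWZ [hc [Y1 hY1 s1]].
move=> [_ [_ [_ [W3 [[X3 [Z3 [hX3 hZ3 ->]]] hW3 ->]]] s2]].
(* Closing up Y1 makes [~` cpow C1 k] Borel. *)
pose C1 := thick d 0 Y1; have hC1 : X C1 by exact: thickX.
have s1' : supported_on d k C1 sigma := supported_onS (subset_thick hd 0 Y1 (lexx 0)) s1.
have [X5 [Z5 [hX5 hZ5 e5]]] : fcap X Z (C1 `&` W3) by apply: hXWZ; exists C1, W3.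
split => //; exists ((C1 `|` X5) `&` (Z3 `|` Z5)).
  by exists (C1 `|` X5), (Z3 `|` Z5); split; [exact: cupX|exact: cupZ|].
have bC : dborel (dmax d k) (~` cpow C1 k).
  exact: dborelC (dborel_closed (dclosed_cpow (dclosed_thick hd 0 Y1))).
apply: vanishes_onS (vanishes_onU (dmax_metric hd k) hc.1 bC s1' s2) => x nx.
have [c1|] := pselect (cpow C1 k x); last by left.
right => c2; apply: nx => i; case: (c2 i) => [[_ z3]|w3].
  by split; [left; exact: c1|left].
have : (C1 `&` W3) (x i) by split; [exact: c1|].
by rewrite e5 => -[? ?]; split; right.
Qed.

End Excision.

Section RelativeHomology.
Context {R : realType} {M : Type} {d : M -> M -> R} (hd : is_metric d).
Context {X Z W : set (set M)}.
Hypotheses (hX : big_family d X) (hZ : big_family d Z) (hW : big_family d W).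
Hypothesis hXWZ : fcap X W `<=` fcap X Z.

Let XZW := fcup (fcap X Z) W.

Let dirX : updirected X := big_family_updirected hX.

Let dirXZW : updirected XZW :=
  updirected_fcup (updirected_fcap dirX (big_family_updirected hZ))
    (big_family_updirected hW).

Let domW : dominated W XZW.
Proof. by apply: dominated_fcupr; exists set0, set0; case: hX; case: hZ; rewrite setI0. Qed.

Lemma rbdry_reflect {n mu} : CX d n X mu ->
  rbdry d (fcup X W) XZW n mu -> rbdry d X (fcap X Z) n mu.
Proof.
move=> hmu [nu hnu hrho]; have [nuX hnuX hnuW] := CX_fcup_split hd hX hW hnu.
exists nuX => //; apply: (CX_fcap_fcup hd hX hZ hXWZ).
  exact: (CXB dirX hmu (CX_bdry hd hnuX)).
have e : agree_bborel (dmax d n) ((mu \- bdry d n nu) \+ bdry d n (nu \- nuX))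
    (mu \- bdry d n nuX).
  by move=> B hB; rewrite /= (bdryB hd hnu.1 hnuX.1 B hB) /= addrA subrK.
exact: (CX_agree e (CXD dirXZW hrho (CX_dominated domW (CX_bdry hd hnuW)))).
Qed.

Lemma rcycle_lift {n mu} : rcycle d (fcup X W) XZW n mu ->
  exists2 mu', rcycle d X (fcap X Z) n mu' & rbdry d (fcup X W) XZW n (mu \- mu').
Proof.
move=> hmu; have [muX hmuX hmuW] := CX_fcup_split hd hX hW (rcycle_CX hmu).
exists muX.
  case: n mu hmu muX hmuX hmuW => [//|m] mu [hmu hb] muX hmuX hmuW; split => //.
  apply: (CX_fcap_fcup hd hX hZ hXWZ (CX_bdry hd hmuX)).
  have e : agree_bborel (dmax d m) (bdry d m mu \- bdry d m (mu \- muX)) (bdry d m muX).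
    by move=> B hB; rewrite /= (bdryB hd hmu.1 hmuX.1 B hB) opprB addrC subrK.
  exact: (CX_agree e (CXB dirXZW hb (CX_dominated domW (CX_bdry hd hmuW)))).
apply: (rbdry_dominated hd _ domW hmuW).
by exists set0, set0; case: hX; case: hW; rewrite setU0.
Qed.

End RelativeHomology.

Theorem proposition3p5 (R : realType) (M : Type) (d : M -> M -> R)
  (hd : is_metric d) (hprop : proper_metric d)
  (X Z W : set (set M))
  (hX : big_family d X) (hZ : big_family d Z) (hW : big_family d W)
  (hXWZ : fcap X W `<=` fcap X Z) (n : nat) :
  (* injectivity of HX_n(X, X⋒Z) -> HX_n(X⋓W, (X⋒Z)⋓W) *)
  (forall mu : set ('I_n.+1 -> M) -> R[i],
     rcycle d X (fcap X Z) n mu ->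
     rbdry d (fcup X W) (fcup (fcap X Z) W) n mu ->
     rbdry d X (fcap X Z) n mu) /\
  (* surjectivity *)
  (forall mu : set ('I_n.+1 -> M) -> R[i],
     rcycle d (fcup X W) (fcup (fcap X Z) W) n mu ->
     exists2 mu' : set ('I_n.+1 -> M) -> R[i],
       rcycle d X (fcap X Z) n mu' &
       rbdry d (fcup X W) (fcup (fcap X Z) W) n (mu \- mu')).
Proof.
split=> mu hmu; first exact: (rbdry_reflect hd hX hZ hW hXWZ (rcycle_CX hmu)).
exact: (rcycle_lift hd hX hZ hW hXWZ hmu).
Qed.
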